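(* Let $U$ be an $n\times n$ unitary matrix and let $b$ be a positive integer smaller than $n/2$. Let $I=\{(j,k): j,k=1,\dots,n,\ |j-k|\le b\text{ or }n-|j-k|\le b\}$ and let $U^{(band)}$ be the $n\times n$ matrix with entries $U^{(band)}_{jk}=U_{jk}$ for $(j,k)\in I$ and $U^{(band)}_{jk}=0$ otherwise. Then there exist positive constants $C_1,C_2$, independent of $n$ and $b$, such that $$\|U^{(band)}\|\le C_1\ln b+C_2.$$
   Context: $\|\cdot\|$ denotes the operator norm. *)

From HB Require Import structures.
From mathcomp Require Import all_boot all_order all_algebra.
From mathcomp Require Import all_classical all_reals.
From mathcomp Require Import exp.
From mathcomp.real_closed Require Import complex.
Set Implicit Arguments. Unset Strict Implicit. Unset Printing Implicit Defensive.
Import Order.TTheory GRing.Theory Num.Theory.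
Local Open Scope ring_scope.
Local Open Scope classical_set_scope.

Definition cabs2 (R : realType) (z : R[i]) : R :=
  (complex.Re z) ^+ 2 + (complex.Im z) ^+ 2.

Definition vnorm (R : realType) (n : nat) (v : 'cV[R[i]]_n) : R :=
  Num.sqrt (\sum_(j < n) cabs2 (v j 0)).

Definition opnorm (R : realType) (n : nat) (A : 'M[R[i]]_n) : R :=
  sup [set vnorm (A *m v) | v in [set v : 'cV[R[i]]_n | vnorm v <= 1]].

Definition adjoint (R : realType) (n : nat) (A : 'M[R[i]]_n) : 'M[R[i]]_n :=
  (map_mx (@conjc R) A)^T.
Definition unitary (R : realType) (n : nat) (U : 'M[R[i]]_n) : Prop :=
  adjoint U *m U = 1%:M.

(* Periodic band: |j-k| <= b or n-|j-k| <= b (0-based indices, same distances). *)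
Definition in_band (n b : nat) (j k : 'I_n) : bool :=
  let d := ((j - k) + (k - j))%N in ((d <= b) || (n - d <= b))%N.

Definition band (R : realType) (n b : nat) (U : 'M[R[i]]_n) : 'M[R[i]]_n :=
  \matrix_(j, k) (if in_band b j k then U j k else 0).

From HB Require Import structures.
From mathcomp Require Import all_boot all_order all_algebra.
From mathcomp Require Import all_classical all_reals.
From mathcomp Require Import exp.
From mathcomp.real_closed Require Import complex.
From mathcomp Require Import ring lra zify.
Import Order.TTheory GRing.Theory Num.Theory.
Set Implicit Arguments. Unset Strict Implicit. Unset Printing Implicit Defensive.
Local Open Scope ring_scope.

(* Cut the indices into consecutive blocks of length b.  The periodic band is
   then the disjoint union of the block diagonal, two staircase triangles in the
   blocks adjacent to the diagonal, and two triangular corners.  Each triangle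
   has the form {(j, k) : B(j) = B'(k), y(k) <= x(j)} with x, y < 2^L, and
   comparing binary expansions splits it into the diagonal {x = y} and L sets
   {B = B', x and y agree above bit l, bit l of x is 1 and of y is 0}.  All these
   pieces are "label masks" {(j, k) : f(j) = g(k)}, and cutting a unitary U down
   to a label mask gives a direct sum of compressions P U Q with orthogonal
   projections P, Q, hence a contraction.  So U^(band) is a sum of 4 L + 5
   contractions with L = floor(log2 b) + 1. *)

Lemma sumr_const_seq (V : nmodType) (I : Type) (s : seq I) (c : V) :
  \sum_(i <- s) c = c *+ size s.
Proof. by rewrite big_const_seq count_predT; elim: (size s) => //= n ->; rewrite mulrS. Qed.

Lemma sqr_sum_le (K : realDomainType) (I : Type) (s : seq I) (a : I -> K) :
  (\sum_(i <- s) a i) ^+ 2 <= (size s)%:R * \sum_(i <- s) a i ^+ 2.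
Proof.
elim: s => [|x s IH]; first by rewrite !big_nil expr0n mul0r.
rewrite !big_cons /= -natr1.
have cross : \sum_(i <- s) 2 * a x * a i <= \sum_(i <- s) (a x ^+ 2 + a i ^+ 2).
  by apply: ler_sum => i _; have := sqr_ge0 (a x - a i); nra.
rewrite -mulr_sumr big_split /= sumr_const_seq -mulr_natl in cross.
move: IH cross; set S := \sum_(i <- s) a i; set Q := \sum_(i <- s) _ ^+ 2.
set N := (size s)%:R; nra.
Qed.

Lemma sum_partition_labels (V : nmodType) (I : finType) (T : eqType) (s : seq T)
    (f : I -> T) (F : I -> T -> V) :
  uniq s -> (forall i, f i \in s) ->
  \sum_i F i (f i) = \sum_(L <- s) \sum_i (if f i == L then F i L else 0).
Proof.
move=> s_uniq f_in; rewrite exchange_big; apply: eq_bigr => i _.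
rewrite (big_rem (f i)) //= eqxx big1_seq ?addr0 // => L /andP[_ L_in].
by case: eqP L_in => // <-; rewrite mem_rem_uniqF.
Qed.

Section EuclideanNorm.
Variable R : realType.

Definition vnorm2 n (v : 'cV[R[i]]_n) : R := \sum_(j < n) cabs2 (v j 0).

Definition adjmx m n (A : 'M[R[i]]_(m, n)) : 'M[R[i]]_(n, m) :=
  (map_mx (@conjc R) A)^T.

Lemma Re_sum (I : Type) (s : seq I) (F : I -> R[i]) :
  complex.Re (\sum_(i <- s) F i) = \sum_(i <- s) complex.Re (F i).
Proof. by apply: big_morph => [[a b] [c d]|]. Qed.

Lemma Im_sum (I : Type) (s : seq I) (F : I -> R[i]) :
  complex.Im (\sum_(i <- s) F i) = \sum_(i <- s) complex.Im (F i).
Proof. by apply: big_morph => [[a b] [c d]|]. Qed.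

Lemma cabs2_ge0 (z : R[i]) : 0 <= cabs2 z.
Proof. by rewrite addr_ge0 ?sqr_ge0. Qed.

Lemma cabs20 : cabs2 (0 : R[i]) = 0.
Proof. by rewrite /cabs2 expr0n addr0. Qed.

Lemma cabs2_Re_conjM (z : R[i]) : cabs2 z = complex.Re (conjc z * z).
Proof. by case: z => a b; rewrite /cabs2 /=; ring. Qed.

Lemma cabs2_sum (I : Type) (s : seq I) (z : I -> R[i]) :
  cabs2 (\sum_(i <- s) z i) <= (size s)%:R * \sum_(i <- s) cabs2 (z i).
Proof. by rewrite /cabs2 Re_sum Im_sum big_split mulrDr lerD ?sqr_sum_le. Qed.

Lemma vnorm2_Re_adjmx n (v : 'cV[R[i]]_n) : vnorm2 v = complex.Re ((adjmx v *m v) 0 0).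
Proof. by rewrite mxE Re_sum; apply: eq_bigr => j _; rewrite !mxE cabs2_Re_conjM. Qed.

Lemma adjmxM m n p (A : 'M[R[i]]_(m, n)) (B : 'M[R[i]]_(n, p)) :
  adjmx (A *m B) = adjmx B *m adjmx A.
Proof. by rewrite /adjmx map_mxM trmx_mul. Qed.

Lemma vnorm2_isometry m n (U : 'M[R[i]]_(m, n)) (v : 'cV[R[i]]_n) :
  adjmx U *m U = 1%:M -> vnorm2 (U *m v) = vnorm2 v.
Proof.
by move=> UU; rewrite !vnorm2_Re_adjmx adjmxM -mulmxA (mulmxA (adjmx U)) UU mul1mx.
Qed.

Lemma vnorm2_sum n (I : Type) (s : seq I) (v : I -> 'cV[R[i]]_n) :
  vnorm2 (\sum_(i <- s) v i) <= (size s)%:R * \sum_(i <- s) vnorm2 (v i).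
Proof.
rewrite /vnorm2 [X in _ * X]exchange_big mulr_sumr /=.
by apply: ler_sum => j _; rewrite summxE; apply: cabs2_sum.
Qed.

Lemma opnorm_le n (A : 'M[R[i]]_n) (c : R) : 0 <= c ->
  (forall v, vnorm2 (A *m v) <= c ^+ 2 * vnorm2 v) -> opnorm A <= c.
Proof.
move=> c_ge0 Ac; apply: ge_sup.
  exists (vnorm (A *m 0)), 0 => //=.
  by rewrite /vnorm big1 ?sqrtr0 // => j _; rewrite mxE cabs20.
move=> _ [v /= v_le1 <-]; rewrite /vnorm -/(vnorm2 _) -(ger0_norm c_ge0) -sqrtr_sqr.
rewrite ler_sqrt; last exact: sqr_ge0.
apply: le_trans (Ac v) _.
rewrite ler_piMr ?sqr_ge0 //.
by move: v_le1; rewrite /vnorm -/(vnorm2 _) -[X in _ <= X]sqrtr1 ler_sqrt.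
Qed.

Definition contraction n (A : 'M[R[i]]_n) := forall v, vnorm2 (A *m v) <= vnorm2 v.

Lemma opnorm_sum_contractions n (I : Type) (s : seq I) (F : I -> 'M[R[i]]_n) :
  (forall i, contraction (F i)) -> opnorm (\sum_(i <- s) F i) <= (size s)%:R.
Proof.
move=> F_contr; apply: opnorm_le => // v.
rewrite mulmx_suml; apply: le_trans (vnorm2_sum _ _) _.
rewrite expr2 -mulrA ler_wpM2l //.
by apply: le_trans (ler_sum _ (fun i _ => F_contr i v)) _; rewrite sumr_const_seq mulr_natl.
Qed.

End EuclideanNorm.

(* [None] marks an unlabelled row or column: it matches nothing. *)
Definition label_match (I J : Type) (T : eqType) (f : I -> option T) (g : J -> option T)
    (j : I) (k : J) : bool :=
  (f j != None) && (f j == g k).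

Section LabelMask.
Variable R : realType.

Definition label_mask m n (T : eqType) (f : 'I_m -> option T) (g : 'I_n -> option T)
    (A : 'M[R[i]]_(m, n)) : 'M[R[i]]_(m, n) :=
  \matrix_(j, k) (if label_match f g j k then A j k else 0).

Lemma vnorm2_label_mask m n (T : eqType) (f : 'I_m -> option T) (g : 'I_n -> option T)
    (U : 'M[R[i]]_(m, n)) (v : 'cV[R[i]]_n) :
  adjmx U *m U = 1%:M -> vnorm2 (label_mask f g U *m v) <= vnorm2 v.
Proof.
move=> UU.
pose s := undup ([seq f j | j <- enum 'I_m] ++ [seq g k | k <- enum 'I_n]).
have s_uniq : uniq s := undup_uniq _.
have f_in j : f j \in s by rewrite mem_undup mem_cat map_f ?mem_enum.
have g_in k : g k \in s by rewrite mem_undup mem_cat map_f ?mem_enum ?orbT.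
pose w L : 'cV[R[i]]_n := \col_k (if g k == L then v k 0 else 0).
have mask_row j : cabs2 ((label_mask f g U *m v) j 0) <= cabs2 ((U *m w (f j)) j 0).
  rewrite !mxE; case: (f j =P None) => [fj|fj].
    rewrite big1 ?cabs20 ?cabs2_ge0 // => k _.
    by rewrite mxE /label_match fj eqxx mul0r.
  rewrite (eq_bigr (fun k => U j k * w (f j) k 0)) // => k _.
  have match_k : label_match f g j k = (g k == f j).
    by rewrite /label_match [g k == _]eq_sym; move/eqP: fj => ->.
  by rewrite !mxE match_k; case: eqP; rewrite ?mul0r ?mulr0.
have v_split : vnorm2 v = \sum_(L <- s) vnorm2 (w L).
  transitivity (\sum_k cabs2 (w (g k) k 0)).
    by apply: eq_bigr => k _; rewrite mxE eqxx.
  rewrite (sum_partition_labels (fun k L => cabs2 (w L k 0)) s_uniq g_in).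
  apply: eq_bigr => L _; apply: eq_bigr => k _; rewrite mxE.
  by case: eqP => // _; rewrite cabs20.
apply: le_trans (ler_sum _ (fun j _ => mask_row j)) _.
rewrite (sum_partition_labels (fun j L => cabs2 ((U *m w L) j 0)) s_uniq f_in) v_split.
apply: ler_sum => L _; rewrite -(vnorm2_isometry (w L) UU).
by apply: ler_sum => j _; case: eqP => _; rewrite ?cabs2_ge0.
Qed.

End LabelMask.

Section DyadicTriangles.

Local Open Scope nat_scope.

Definition dyadic_split (l x y : nat) : bool :=
  [&& x %/ 2 ^ l.+1 == y %/ 2 ^ l.+1, odd (x %/ 2 ^ l) & ~~ odd (y %/ 2 ^ l)].

Lemma dyadic_splitS l x y : dyadic_split l.+1 x y = dyadic_split l (x %/ 2) (y %/ 2).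
Proof. by rewrite /dyadic_split !(expnS 2) !divnMA. Qed.

Lemma leq_dyadic L x y : x < 2 ^ L -> y < 2 ^ L ->
  (y <= x) = (x == y) + count (fun l => dyadic_split l x y) (iota 0 L) :> nat.
Proof.
elim: L x y => [|L IH] x y; first by rewrite !ltnS !leqn0 => /eqP-> /eqP->.
rewrite expnSr -!ltn_divLR // => /IH /[apply] IH2.
rewrite /= -add1n iotaDl count_map.
rewrite (eq_count (a2 := fun l => dyadic_split l (x %/ 2) (y %/ 2))); last first.
  by move=> l; rewrite /= add1n dyadic_splitS.
move: IH2; rewrite /dyadic_split expn0 expn1 !divn1 !divn2.
have := odd_double_half x; have := odd_double_half y.
case: (odd x); case: (odd y); move: (x./2) (y./2) (count _ _) => p q c /=; lia.
Qed.

Definition labels_below (I T : Type) (N : nat) (a : I -> option (T * nat)) :=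
  forall j B x, a j = Some (B, x) -> x < N.

Definition level_label (I T : Type) (l : nat) (o : bool) (a : I -> option (T * nat))
    (j : I) : option (T * nat) :=
  if a j is Some (B, x) then
    if odd (x %/ 2 ^ l) == o then Some (B, x %/ 2 ^ l.+1) else None
  else None.

Definition triangle_masks (I J T : Type) (a : I -> option (T * nat))
    (c : J -> option (T * nat)) (L : nat) :=
  (a, c) :: [seq (level_label l true a, level_label l false c) | l <- iota 0 L].

Definition triangle (I J : Type) (T : eqType) (a : I -> option (T * nat))
    (c : J -> option (T * nat)) (j : I) (k : J) : bool :=
  if (a j, c k) is (Some (B, x), Some (B', y)) then (B == B') && (y <= x) else false.

Lemma count_triangle_masks (I J : Type) (T : eqType) (a : I -> option (T * nat))
    (c : J -> option (T * nat)) L j k :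
  labels_below (2 ^ L) a -> labels_below (2 ^ L) c ->
  count (fun m => label_match m.1 m.2 j k) (triangle_masks a c L) = triangle a c j k.
Proof.
move=> a_lt c_lt; rewrite /= count_map.
rewrite (eq_count (a2 := fun l => if (a j, c k) is (Some (B, x), Some (B', y))
                      then (B == B') && dyadic_split l x y else false)); last first.
  move=> l; rewrite /= /label_match /level_label /dyadic_split.
  case: (a j) => [[B x]|]; case: (c k) => [[B' y]|] //=; last by case: ifP.
  by case: (odd (x %/ 2 ^ l)); case: (odd (y %/ 2 ^ l));
    rewrite /= ?xpair_eqE ?andbT ?andbF.
rewrite /label_match /triangle.
case a_j: (a j) => [[B x]|]; case c_k: (c k) => [[B' y]|] /=; rewrite ?count_pred0 //.
case: (B =P B') => [<-|neqBB'] /=.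
  by rewrite (inj_eq Some_inj) xpair_eqE eqxx -leq_dyadic
    ?(a_lt _ _ _ a_j) ?(c_lt _ _ _ c_k).
by rewrite count_pred0 (inj_eq Some_inj) xpair_eqE; case: eqP.
Qed.

End DyadicTriangles.

Section BandMasks.

Local Open Scope nat_scope.

Definition block_label n b (j : 'I_n) : option (nat * nat) := Some (j %/ b, 0).

(* Row and column labels of the four triangles of the band: the parts in the
   block right of and left of the diagonal block, and the top-right and
   bottom-left corners where the band wraps around.  The residues are reflected
   (b.-1 - _) where the triangle opens the other way. *)
Definition band_triangles n b :
    seq (('I_n -> option (nat * nat)) * ('I_n -> option (nat * nat))) :=
  [:: (fun j : 'I_n => Some ((j %/ b).+1, j %% b),
       fun k : 'I_n => Some (k %/ b, k %% b));
      (fun j : 'I_n => Some (j %/ b, b.-1 - j %% b),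
       fun k : 'I_n => Some ((k %/ b).+1, b.-1 - k %% b));
      (fun j : 'I_n => if j < b then Some (0, b.-1 - j) else None,
       fun k : 'I_n => if n - b <= k then Some (0, b.-1 - (k - (n - b))) else None);
      (fun j : 'I_n => if n - b <= j then Some (0, j - (n - b)) else None,
       fun k : 'I_n => if k < b then Some (0, nat_of_ord k) else None)].

Definition band_masks n b L :=
  (@block_label n b, @block_label n b) ::
  flatten [seq triangle_masks p.1 p.2 L | p <- band_triangles n b].

Lemma size_band_masks n b L : size (band_masks n b L) = 4 * L + 5.
Proof.
rewrite /band_masks -cat1s size_cat size_flatten /shape -map_comp.
rewrite (@eq_map _ _ _ (fun=> L.+1)) /=; first lia.
by move=> p; rewrite /= size_map size_iota.
Qed.

Lemma band_triangles_below n b N p : 0 < b -> b <= N -> p \in band_triangles n b ->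
  labels_below N p.1 /\ labels_below N p.2.
Proof.
move=> b_gt0 bN; rewrite !inE => /or4P[] /eqP-> /=; split=> j B x /=;
  try case: ifP => // ?; case=> _ <-; move: (ltn_ord j) (ltn_pmod j b_gt0); lia.
Qed.

Lemma dist_le_blocks b j k : 0 < b ->
  ((j - k) + (k - j) <= b) =
    (j %/ b == k %/ b) + ((j %/ b).+1 == k %/ b) && (k %% b <= j %% b)
    + (j %/ b == (k %/ b).+1) && (j %% b <= k %% b) :> nat.
Proof.
move=> b_gt0; rewrite {1 2}(divn_eq j b) {1 2}(divn_eq k b).
move: (ltn_pmod j b_gt0) (ltn_pmod k b_gt0).
move: (j %/ b) (k %/ b) (j %% b) (k %% b) => Q q r s r_lt s_lt.
case: (ltngtP Q q) => [Qq|Qq|<-]; last lia.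
  have [->|Q2] : q = Q.+1 \/ Q.+2 <= q by lia.
    by rewrite mulSn; lia.
  by have := leq_mul Q2 (leqnn b); rewrite !mulSn; lia.
have [->|Q2] : Q = q.+1 \/ q.+2 <= Q by lia.
  by rewrite mulSn; lia.
by have := leq_mul Q2 (leqnn b); rewrite !mulSn; lia.
Qed.

Lemma in_band_triangles n b (j k : 'I_n) : 0 < b -> 2 * b < n ->
  in_band b j k = (j %/ b == k %/ b) + \sum_(p <- band_triangles n b) triangle p.1 p.2 j k
    :> nat.
Proof.
move=> b_gt0 nb; rewrite /in_band !big_cons big_nil /triangle /= addn0.
have j_lt := ltn_ord j; have k_lt := ltn_ord k.
have -> : (b.-1 - k %% b <= b.-1 - j %% b) = (j %% b <= k %% b).
  by move: (ltn_pmod j b_gt0) (ltn_pmod k b_gt0); lia.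
set d := (j - k) + (k - j).
have -> : ((d <= b) || (n - d <= b) : nat) = (d <= b) + (n - d <= b) by lia.
rewrite !addnA -(dist_le_blocks j k b_gt0) -addnA; congr (_ + _).
by repeat case: ifP => ? /=; lia.
Qed.

Lemma count_band_masks n b L (j k : 'I_n) : 0 < b -> 2 * b < n -> b <= 2 ^ L ->
  count (fun m => label_match m.1 m.2 j k) (band_masks n b L) = in_band b j k.
Proof.
move=> b_gt0 nb bL.
rewrite /band_masks -cat1s count_cat count_flatten sumnE in_band_triangles //.
congr (_ + _).
  by rewrite /= addn0 /label_match /block_label /= (inj_eq Some_inj) xpair_eqE andbT.
rewrite !big_map big_seq [RHS]big_seq; apply: eq_bigr => p p_in.
have [p1_lt p2_lt] := band_triangles_below b_gt0 bL p_in.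
exact: count_triangle_masks.
Qed.
End BandMasks.

Lemma band_label_masks (R : realType) n b L (U : 'M[R[i]]_n) :
  (0 < b)%N -> (2 * b < n)%N -> (b <= 2 ^ L)%N ->
  band b U = \sum_(m <- band_masks n b L) label_mask m.1 m.2 U.
Proof.
move=> b_gt0 nb bL; apply/matrixP => j k; rewrite summxE mxE.
rewrite (eq_bigr (fun m => if label_match m.1 m.2 j k then U j k else 0)) => [|m _];
  last by rewrite mxE.
rewrite -big_mkcond -big_filter sumr_const_seq size_filter count_band_masks //.
by case: in_band.
Qed.

Lemma trunc_log2_le_ln (R : realType) b : (0 < b)%N ->
  (trunc_log 2 b)%:R <= ln (b%:R : R) / ln 2.
Proof.
move=> b_gt0; have ln2_gt0 : 0 < ln (2 : R) by rewrite ln_gt0 // ltr1n.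
rewrite ler_pdivlMr // mulr_natl -lnXn // ler_ln ?posrE ?exprn_gt0 ?ltr0n //.
by rewrite -natrX ler_nat trunc_logP.
Qed.

Theorem lemma4p2 (R : realType) :
  exists C1 C2 : R, 0 < C1 /\ 0 < C2 /\
    forall (n b : nat) (U : 'M[R[i]]_n),
      unitary U -> (0 < b)%N -> (2 * b < n)%N ->
      opnorm (band b U) <= C1 * ln (b%:R) + C2.
Proof.
have ln2_gt0 : 0 < ln (2 : R) by rewrite ln_gt0 // ltr1n.
exists (4 / ln 2), 9; split; first by rewrite divr_gt0.
split=> // n b U U_unitary b_gt0 nb.
set t := trunc_log 2 b.
have b_le : (b <= 2 ^ t.+1)%N by rewrite ltnW // trunc_log_ltn.
rewrite (band_label_masks U b_gt0 nb b_le).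
apply: le_trans (opnorm_sum_contractions _ _) _ => [m v|].
  exact: vnorm2_label_mask.
rewrite size_band_masks (_ : 4 * t.+1 + 5 = 4 * t + 9)%N; last by lia.
rewrite natrD natrM mulrAC -mulrA lerD2r ler_pM2l //.
exact: trunc_log2_le_ln.
Qed.
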